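(* Let $\mathcal{X} \subseteq \mathbb{R}^m$ be countable and let $\widehat\nu = \sum_{j=1}^N \widehat\nu_j \delta_{\widehat x_j}$ be a probability mass function on $\mathcal{X}$ supported on $N$ distinct points $\widehat x_1,\dots,\widehat x_N \in \mathcal{X}$ with $\widehat\nu_j > 0$ for all $j$ and $\sum_j \widehat\nu_j = 1$. For $\varepsilon \ge 0$ let $\mathbb{B}_{\mathrm{KL}}(\widehat\nu,\varepsilon) = \{\nu \in \mathcal{M}(\mathcal{X}) : \mathrm{KL}(\widehat\nu \parallel \nu) \le \varepsilon\}$. Then for any $\varepsilon \ge 0$ and any $x \in \mathcal{X}$ there exists a measure $\nu^\star_{\mathrm{KL}} \in \mathbb{B}_{\mathrm{KL}}(\widehat\nu,\varepsilon)$ such that $$\sup_{\nu \in \mathbb{B}_{\mathrm{KL}}(\widehat\nu,\varepsilon)} \nu(x) = \nu^\star_{\mathrm{KL}}(x).$$ Moreover, $\nu^\star_{\mathrm{KL}}$ is supported on at most $N+1$ points and satisfies $\mathrm{supp}(\nu^\star_{\mathrm{KL}}) \subseteq \mathrm{supp}(\widehat\nu) \cup \{x\}$.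
   Context: $\mathcal{M}(\mathcal{X})$ is the set of probability mass functions supported on $\mathcal{X}$; $\delta_z$ is the Dirac measure at $z$. For $\nu_1,\nu_2 \in \mathcal{M}(\mathcal{X})$ with $\nu_1$ absolutely continuous with respect to $\nu_2$, the Kullback–Leibler divergence is $\mathrm{KL}(\nu_1 \parallel \nu_2) = \sum_{z \in \mathcal{X}} f(\nu_1(z)/\nu_2(z))\,\nu_2(z)$ with $f(t) = t\log t - t + 1$ (so $f(0)=1$). *)

From HB Require Import structures.
From mathcomp Require Import all_boot all_order all_algebra.
From mathcomp Require Import all_classical all_reals all_analysis.
Set Implicit Arguments. Unset Strict Implicit. Unset Printing Implicit Defensive.
Import Order.TTheory GRing.Theory Num.Theory.
Local Open Scope classical_set_scope.
Local Open Scope ring_scope.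

(* Points of R^m are row vectors 'rV[R]_m; a measure on X is a function
   'rV[R]_m -> R vanishing outside X. *)

(* f(t) = t log t - t + 1; with mathcomp's ln 0 = 0 we get f(0) = 1. *)
Definition fKL (R : realType) (t : R) : R := t * ln t - t + 1.

Definition is_pmf (R : realType) (m : nat) (X : set 'rV[R]_m)
  (nu : 'rV[R]_m -> R) : Prop :=
  (forall z, 0 <= nu z) /\ (forall z, ~ X z -> nu z = 0) /\
  (\esum_(z in X) (nu z)%:E = 1%E).

Definition abs_cont (R : realType) (m : nat) (nu1 nu2 : 'rV[R]_m -> R) : Prop :=
  forall z, nu2 z = 0 -> nu1 z = 0.

(* KL(nu1 || nu2) = sum_{z in X} f(nu1 z / nu2 z) nu2 z  (an extended real;
   the terms are nonnegative), only meaningful when nu1 << nu2. *)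
Definition KLdiv (R : realType) (m : nat) (X : set 'rV[R]_m)
  (nu1 nu2 : 'rV[R]_m -> R) : \bar R :=
  \esum_(z in X) (fKL (nu1 z / nu2 z) * nu2 z)%:E.

Definition KLball (R : realType) (m : nat) (X : set 'rV[R]_m)
  (nuh : 'rV[R]_m -> R) (eps : R) : set ('rV[R]_m -> R) :=
  [set nu | is_pmf X nu /\ abs_cont nuh nu /\ (KLdiv X nuh nu <= eps%:E)%E].

Definition empirical (R : realType) (m N : nat) (w : 'I_N -> R)
  (xh : 'I_N -> 'rV[R]_m) : 'rV[R]_m -> R :=
  fun z => \sum_(j < N) w j * (xh j == z)%:R.

Definition supp (R : realType) (m : nat) (nu : 'rV[R]_m -> R) : set 'rV[R]_m :=
  [set z | nu z != 0].

From mathcomp Require Import all_boot all_order all_algebra.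
From mathcomp Require Import all_classical all_reals all_analysis.
From mathcomp Require Import ring lra.
Set Implicit Arguments. Unset Strict Implicit. Unset Printing Implicit Defensive.
Import Order.TTheory GRing.Theory Num.Theory numFieldNormedType.Exports.
Local Open Scope classical_set_scope.
Local Open Scope ring_scope.

(* Lumping together all atoms other than [x] (log-sum inequality) gives
   [KL(nuh || nu) >= binKL (nuh x) (nu x)], the divergence between the Bernoulli
   laws of parameters [nuh x] and [nu x].  As [binKL c] increases strictly on
   [[c, 1)], every [nu] in the ball satisfies [nu x <= t], the largest [t >= c]
   with [binKL c t <= eps].  The bound is attained by moving mass [t] to [x] and
   rescaling the other atoms of [nuh] by [(1 - t) / (1 - c)]: the log-sum
   inequality is then an equality, so this measure has divergence exactly
   [binKL c t], and it is supported on [supp nuh `|` [set x]]. *)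

Section KLBall.
Variable R : realType.
Implicit Types a b c t y A B D eps : R.

Lemma ln_ge1BV y : 0 < y -> 1 - y^-1 <= ln y.
Proof.
move=> y0; have := @le_ln1Dx R (y^-1 - 1).
rewrite addrCA subrr addr0 lnV ?posrE // ltrBDr addNr invr_gt0 => /(_ y0).
lra.
Qed.

Lemma ln_gt1BV y : 0 < y -> y != 1 -> 1 - y^-1 < ln y.
Proof.
move=> y0 y1; have := @expR_gt1Dx R (ln y^-1).
rewrite lnK ?posrE ?invr_gt0 // lnV ?posrE // oppr_eq0 ln_eq0 // y1 => /(_ isT).
lra.
Qed.

Lemma fKL_ge0 t : 0 <= fKL t.
Proof.
rewrite /fKL; have [t0|t0] := leP t 0; first by rewrite ln0 // mulr0; lra.
have : t * (1 - t^-1) <= t * ln t by rewrite ler_pM2l // ln_ge1BV.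
rewrite mulrBr mulr1 divff ?gt_eqF //; lra.
Qed.

Lemma fKL_divrM a b : (b = 0 -> a = 0) -> fKL (a / b) * b = a * ln (a / b) - a + b.
Proof.
move=> ab; have [b0|b0] := eqVneq b 0.
  by rewrite b0 ab // mulr0 mul0r subrr addr0.
by rewrite /fKL; field.
Qed.

Lemma log_sum_inequality (I : finType) (P : pred I) (a b : I -> R) :
    (forall i, P i -> 0 < a i) -> (forall i, P i -> 0 < b i) ->
  (\sum_(i | P i) a i) * ln ((\sum_(i | P i) a i) / \sum_(i | P i) b i)
    <= \sum_(i | P i) a i * ln (a i / b i).
Proof.
move=> a0 b0; have [i0 Pi0|P0] := pickP P; last by rewrite !big_pred0 // mul0r.
set A := \sum_(i | P i) a i; set B := \sum_(i | P i) b i.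
have A0 : 0 < A by rewrite /A (bigD1 i0) //= ltr_pwDl ?a0 // sumr_ge0 // => i /andP[/a0/ltW].
have B0 : 0 < B by rewrite /B (bigD1 i0) //= ltr_pwDl ?b0 // sumr_ge0 // => i /andP[/b0/ltW].
(* [ln y >= 1 - y^-1] at [y = (a i / b i) / (A / B)]. *)
have tangent i : P i -> a i * ln (A / B) + (a i - b i * (A / B)) <= a i * ln (a i / b i).
  move=> Pi; have ai := a0 i Pi; have bi := b0 i Pi.
  have y0 : 0 < a i * B / (b i * A) by rewrite divr_gt0 ?mulr_gt0.
  have -> : a i / b i = (A / B) * (a i * B / (b i * A)) by field; rewrite !gt_eqF.
  rewrite (lnM (divr_gt0 A0 B0) y0) mulrDr lerD2l.
  have := ler_wpM2l (ltW ai) (ln_ge1BV y0).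
  suff -> : a i - b i * (A / B) = a i * (1 - (a i * B / (b i * A))^-1) by [].
  by field; rewrite !gt_eqF.
apply: le_trans (ler_sum _ tangent).
rewrite big_split sumrB /= -!mulr_suml -/A -/B mulrCA divff ?gt_eqF // mulr1.
by rewrite subrr addr0.
Qed.

Lemma mul_ln_div_addr_le A B D : 0 < B -> B <= D -> D <= A ->
  A * ln (A / D) + D <= A * ln (A / B) + B.
Proof.
move=> B0 BD DA; have D0 : 0 < D by lra.
have A0 : 0 < A by lra.
have -> : A / B = (A / D) * (D / B) by field; rewrite !gt_eqF.
rewrite (lnM (divr_gt0 A0 D0) (divr_gt0 D0 B0)) mulrDr.
have := ler_wpM2l (ltW A0) (ln_ge1BV (divr_gt0 D0 B0)); rewrite invf_div.
have : 0 <= (D - B) * (A - D) / D by rewrite divr_ge0 ?mulr_ge0 //; lra.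
have -> : (D - B) * (A - D) / D = A * (1 - B / D) - (D - B) by field; rewrite gt_eqF.
lra.
Qed.

Definition binKL c t := c * ln (c / t) + (1 - c) * ln ((1 - c) / (1 - t)).

Lemma binKL_lnE c t : 0 <= c < 1 -> c <= t < 1 ->
  binKL c t = c * ln c - c * ln t + ((1 - c) * ln (1 - c) - (1 - c) * ln (1 - t)).
Proof.
move=> /andP[c0 c1] /andP[ct t1]; rewrite /binKL.
rewrite (@ln_div _ (1 - c)) ?posrE ?subr_gt0 // mulrBr; congr (_ + _).
have [->|cn0] := eqVneq c 0; first by rewrite !mul0r subrr.
by rewrite ln_div ?posrE ?mulrBr //; lra.
Qed.

Lemma binKL_ltr c t1 t2 : 0 <= c -> c <= t1 -> t1 < t2 -> t2 < 1 ->
  binKL c t1 < binKL c t2.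
Proof.
move=> c0 ct1 t12 t21.
have [c1 ct2 t11] : [/\ c < 1, c <= t2 & t1 < 1] by split; lra.
rewrite !binKL_lnE ?c0 ?c1 ?ct1 ?ct2 ?t11 ?t21 //.
have ln1B : ln (1 - t2) < ln (1 - t1) by rewrite ltr_ln ?posrE; lra.
have [->|cn0] := eqVneq c 0; first by rewrite !mul0r subr0; lra.
have cp : 0 < c by rewrite lt_def cn0.
have t10 : 0 < t1 by lra.
have h1 : c * (1 - t2 / t1) <= c * (ln t1 - ln t2).
  rewrite ler_pM2l // -ln_div ?posrE; try lra.
  by rewrite -invf_div ln_ge1BV // divr_gt0 //; lra.
have h2 : (1 - c) * (1 - (1 - t2) / (1 - t1)) < (1 - c) * (ln (1 - t1) - ln (1 - t2)).
  rewrite ltr_pM2l ?subr_gt0 // -ln_div ?posrE; try lra.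
  rewrite -invf_div ln_gt1BV ?divr_gt0 //; try lra.
  have t2n1 : 1 - t2 != 0 by rewrite subr_eq0 gt_eqF.
  by apply/eqP => /(congr1 (fun u => u * (1 - t2))); rewrite divfK // mul1r; lra.
have : 0 <= c * (1 - t2 / t1) + (1 - c) * (1 - (1 - t2) / (1 - t1)).
  have -> : c * (1 - t2 / t1) + (1 - c) * (1 - (1 - t2) / (1 - t1)) =
      (t2 - t1) * (t1 - c) / (t1 * (1 - t1)).
    by field; rewrite !gt_eqF //; lra.
  by rewrite divr_ge0 ?mulr_ge0 //; lra.
lra.
Qed.

Lemma binKL_ivt c eps : 0 <= c < 1 -> 0 <= eps ->
  exists2 t, c <= t < 1 & binKL c t = eps.
Proof.
move=> /andP[c0 c1] eps0; have c1' : 0 < 1 - c by rewrite subr_gt0.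
(* T is chosen so that the second term of [binKL c T] is [eps + 1], while the
   first term is at least [c - T >= -1]. *)
pose T := 1 - (1 - c) * expR (- ((eps + 1) / (1 - c))).
have e0 := expR_gt0 (- ((eps + 1) / (1 - c))).
have e1 : expR (- ((eps + 1) / (1 - c))) <= 1.
  by rewrite expR_le1 oppr_le0 divr_ge0 //; lra.
have T1 : T < 1 by rewrite /T ltrBlDl ltrDr mulr_gt0 ?subr_gt0.
have cT : c <= T.
  by have := ler_wpM2l (ltW c1') e1; rewrite /T mulr1; lra.
pose psi s := c * ln c - c * ln s + ((1 - c) * ln (1 - c) - (1 - c) * ln (1 - s)).
have binKL_psi s : c <= s <= T -> binKL c s = psi s.
  by move=> /andP[cs sT]; rewrite binKL_lnE ?c0 ?c1 ?cs //=; lra.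
have psi_cont s : c <= s <= T -> {for s, continuous psi}.
  move=> /andP[cs sT].
  have cont_cln : {for s, continuous (fun s => c * ln s)}.
    have [->|cn0] := eqVneq c 0.
      rewrite (_ : (fun s => 0 * ln s) = cst 0); first exact: cst_continuous.
      by apply: funext => r; rewrite mul0r.
    apply: continuousM; first exact: cst_continuous.
    have cp : 0 < c by rewrite lt_def cn0.
    by apply: continuous_ln; lra.
  have cont_1B : {for s, continuous (fun s : R => 1 - s)}.
    by apply: continuousB; [exact: cst_continuous | exact: id].
  apply: continuousD; apply: continuousB; try exact: cst_continuous; first exact: cont_cln.
  apply: continuousM; first exact: cst_continuous.
  by apply: continuous_comp cont_1B (continuous_ln _); lra.
have psi_c : psi c = 0 by rewrite /psi; lra.
have psi_T : eps <= psi T.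
  rewrite -binKL_psi ?cT ?lexx // /binKL.
  have -> : (1 - c) / (1 - T) = expR ((eps + 1) / (1 - c)).
    have -> : 1 - T = (1 - c) * expR (- ((eps + 1) / (1 - c))) by rewrite /T; ring.
    by rewrite invfM mulrA divff ?gt_eqF // mul1r expRN invrK.
  rewrite expRK (_ : (1 - c) * _ = eps + 1); last by rewrite mulrC divfK ?gt_eqF.
  suff : c - T <= c * ln (c / T) by lra.
  have [->|cn0] := eqVneq c 0; first by rewrite mul0r sub0r oppr_le0; lra.
  have cp : 0 < c by rewrite lt_def cn0.
  have := ler_wpM2l (ltW cp) (ln_ge1BV (divr_gt0 cp (lt_le_trans cp cT))).
  by rewrite invf_div mulrBr mulr1 mulrCA divff ?gt_eqF ?mulr1 //; lra.
have [t tcT psit] : exists2 t, t \in `[c, T] & psi t = eps.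
  apply: IVT => //.
    apply: continuous_in_subspaceT => s; rewrite inE /= in_itv /=; exact: psi_cont.
  by rewrite psi_c (min_idPl (le_trans eps0 psi_T)) (max_idPr (le_trans eps0 psi_T)) eps0.
rewrite in_itv /= in tcT; exists t; first by case/andP: tcT => -> /le_lt_trans ->.
by rewrite binKL_psi.
Qed.

Lemma binKL_radius c eps : 0 <= c <= 1 -> 0 <= eps ->
  exists t, [/\ c <= t <= 1, (c < 1 -> t < 1), binKL c t <= eps &
    forall b, c < b < 1 -> binKL c b <= eps -> b <= t].
Proof.
move=> /andP[c0 c1] eps0; have [c_lt1|] := ltP c 1; last first.
  move=> c_ge1; have -> : c = 1 by apply/eqP; rewrite eq_le c1.
  exists 1; split; rewrite ?lexx //; last by move=> b /andP[_ /ltW].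
  by rewrite /binKL subrr mul0r addr0 divr1 ln1 mulr0.
have c01 : 0 <= c < 1 by rewrite c0.
have [t /andP[ct t1] <-] := binKL_ivt c01 eps0.
exists t; split => //; first by rewrite ct ltW.
move=> b /andP[cb b1] le_bt; rewrite leNgt; apply/negP => tb.
by have := binKL_ltr c0 ct tb b1; rewrite ltNge le_bt.
Qed.

Lemma sup_eq_max (E : set R) t : E t -> ubound E t -> sup E = t.
Proof.
move=> Et ubt; apply/eqP; rewrite eq_le ge_sup //=; last by exists t.
by apply: ub_le_sup => //; exists t.
Qed.

Lemma esum_big_seq (T : choiceType) (X : set T) (s : seq T) (f : T -> R) :
    uniq s -> (forall z, z \in s -> X z) -> (forall z, X z -> 0 <= f z) ->
    (forall z, X z -> z \notin s -> f z = 0) ->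
  \esum_(z in X) (f z)%:E = (\sum_(z <- s) f z)%:E.
Proof.
move=> s_uniq sX f_ge0 f_out.
rewrite (esumID [set` s]); last by move=> z /f_ge0; rewrite lee_fin.
rewrite [X in (_ + X)%E]esum1 ?adde0; last first.
  by move=> z [Xz /negP zs]; rewrite f_out.
have -> : X `&` [set` s] = [set` s].
  by apply/seteqP; split => [z []//|z zs]; split => //; exact: sX.
rewrite esum_fset; first by rewrite -fsbig_seq // sumEFin.
- exact: finite_seq.
- by move=> z; rewrite inE => /sX /f_ge0; rewrite lee_fin.
Qed.

Lemma le_big_seq_esum (T : choiceType) (X : set T) (s : seq T) (f : T -> R) :
  uniq s -> (forall z, z \in s -> X z) -> ((\sum_(z <- s) f z)%:E <= \esum_(z in X) (f z)%:E)%E.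
Proof.
move=> s_uniq sX; apply: esum_ge; exists [set` s].
  by split; [exact: finite_seq | move=> z /sX].
by rewrite -fsbig_seq // sumEFin.
Qed.

Lemma pmf_le1 m (X : set 'rV[R]_m) nu z : is_pmf X nu -> X z -> nu z <= 1.
Proof.
move=> [_ [_ nu_sum1]] Xz; rewrite -lee_fin -nu_sum1 -(big_seq1 +%R z nu).
by apply: le_big_seq_esum => // y; rewrite inE => /eqP ->.
Qed.

Section EmpiricalMeasure.
Variables (m N : nat) (X : set 'rV[R]_m) (xh : 'I_N -> 'rV[R]_m) (w : 'I_N -> R).
Hypotheses (xhX : forall j, X (xh j)) (xh_inj : injective xh).
Hypotheses (w_gt0 : forall j, 0 < w j) (sum_w : \sum_(j < N) w j = 1).
Variable x : 'rV[R]_m.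
Hypothesis Xx : X x.

Local Notation nuh := (empirical w xh).

Lemma empirical_atom j : nuh (xh j) = w j.
Proof.
rewrite /empirical (bigD1 j) //= eqxx mulr1 big1 ?addr0 // => i ij.
by rewrite (inj_eq xh_inj) (negbTE ij) mulr0.
Qed.

Lemma empirical_eq0 z : (forall j, xh j != z) -> nuh z = 0.
Proof. by move=> xhz; rewrite /empirical big1 // => j _; rewrite (negbTE (xhz j)) mulr0. Qed.

Lemma empirical_ge0 z : 0 <= nuh z.
Proof. by rewrite sumr_ge0 // => j _; rewrite mulr_ge0 ?ler0n ?ltW. Qed.

Lemma sum_w_neq_x : \sum_(j | xh j != x) w j = 1 - nuh x.
Proof.
have -> : nuh x = \sum_(j | xh j == x) w j.
  by rewrite /empirical [RHS]big_mkcond /=; apply: eq_bigr => j _; case: eqP; rewrite ?mulr1 ?mulr0.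
by move: sum_w; rewrite (bigID (fun j => xh j == x)) /=; lra.
Qed.

Lemma empirical_le1 : nuh x <= 1.
Proof. by rewrite -subr_ge0 -sum_w_neq_x sumr_ge0 // => j _; exact: ltW. Qed.

Lemma empirical_lt1 j : xh j != x -> nuh x < 1.
Proof.
move=> jx; rewrite -subr_gt0 -sum_w_neq_x (bigD1 j) //= ltr_pwDl ?w_gt0 //.
by rewrite sumr_ge0 // => i _; exact: ltW.
Qed.

Lemma exists_atom_neq_x : nuh x < 1 -> exists j, xh j != x.
Proof.
rewrite -subr_gt0 -sum_w_neq_x; case: (pickP (fun j => xh j != x)) => [j jx|none].
  by exists j.
by rewrite big_pred0 // ltxx.
Qed.

Definition support_seq := x :: [seq xh j | j <- enum 'I_N & xh j != x].

Lemma support_seq_uniq : uniq support_seq.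
Proof.
rewrite /= map_inj_uniq // filter_uniq ?enum_uniq // andbT.
by apply/mapP => -[j]; rewrite mem_filter => /andP[jx _] xj; rewrite xj eqxx in jx.
Qed.

Lemma support_seq_sub z : z \in support_seq -> X z.
Proof. by rewrite in_cons => /orP[/eqP -> //| /mapP[j _ ->]]. Qed.

Lemma size_support_seq : (size support_seq <= N.+1)%N.
Proof. by rewrite /= ltnS size_map size_filter (leq_trans (count_size _ _)) ?size_enum_ord. Qed.

Lemma big_support_seq (h : 'rV[R]_m -> R) :
  \sum_(z <- support_seq) h z = h x + \sum_(j | xh j != x) h (xh j).
Proof. by rewrite big_cons big_map big_filter big_enum_cond. Qed.

Lemma empirical_notin_support z : z \notin support_seq -> nuh z = 0.
Proof.
rewrite in_cons negb_or => /andP[zx zs]; apply: empirical_eq0 => j.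
by apply: contraNneq zs => xhjz; rewrite -xhjz map_f // mem_filter mem_enum xhjz zx.
Qed.

Lemma pmf_support_seq_le1 nu : is_pmf X nu ->
  nu x + \sum_(j | xh j != x) nu (xh j) <= 1.
Proof.
move=> [_ [_ nu_sum1]]; rewrite -big_support_seq -lee_fin -nu_sum1.
exact: le_big_seq_esum support_seq_uniq support_seq_sub.
Qed.

Lemma abs_cont_atom_gt0 nu j : (forall z, 0 <= nu z) -> abs_cont nuh nu -> 0 < nu (xh j).
Proof.
move=> nu_ge0 ac; rewrite lt_def nu_ge0 andbT.
by apply: contra_neq (lt0r_neq0 (w_gt0 j)) => /ac; rewrite empirical_atom.
Qed.

Lemma sum_atoms_gt0 nu : (forall z, 0 <= nu z) -> abs_cont nuh nu -> nuh x < 1 ->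
  0 < \sum_(j | xh j != x) nu (xh j).
Proof.
move=> nu_ge0 ac /exists_atom_neq_x[j jx].
by rewrite (bigD1 j) //= ltr_pwDl ?sumr_ge0 ?abs_cont_atom_gt0.
Qed.

Lemma mass_lt1 nu : is_pmf X nu -> abs_cont nuh nu -> nuh x < 1 -> nu x < 1.
Proof.
move=> nu_pmf ac c_lt1; have := pmf_support_seq_le1 nu_pmf.
by have := sum_atoms_gt0 nu_pmf.1 ac c_lt1; lra.
Qed.

Lemma KLdiv_ge_binKL nu : is_pmf X nu -> abs_cont nuh nu -> nuh x <= nu x -> nu x < 1 ->
  ((binKL (nuh x) (nu x))%:E <= KLdiv X nuh nu)%E.
Proof.
move=> nu_pmf ac cb b1; have nu_ge0 := nu_pmf.1.
have c_lt1 : nuh x < 1 by lra.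
have nu_atom_gt0 j : xh j != x -> 0 < nu (xh j) by move=> _; exact: abs_cont_atom_gt0.
apply: le_trans (le_big_seq_esum _ support_seq_uniq support_seq_sub).
rewrite lee_fin big_support_seq fKL_divrM; last first.
  by move=> b0; apply/eqP; rewrite eq_le empirical_ge0 andbT -b0.
rewrite (eq_bigr (fun j => w j * ln (w j / nu (xh j)) - w j + nu (xh j))); last first.
  by move=> j jx; rewrite empirical_atom fKL_divrM // => /eqP; rewrite gt_eqF ?nu_atom_gt0.
rewrite !big_split sumrN /= sum_w_neq_x.
set S := \sum_(j | xh j != x) nu (xh j).
have S_gt0 : 0 < S := sum_atoms_gt0 nu_ge0 ac c_lt1.
have S_le : S <= 1 - nu x by have := pmf_support_seq_le1 nu_pmf; rewrite -/S; lra.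
have D_le : 1 - nu x <= 1 - nuh x by lra.
have := log_sum_inequality (fun j _ => w_gt0 j) nu_atom_gt0; rewrite sum_w_neq_x -/S.
have := mul_ln_div_addr_le S_gt0 S_le D_le.
rewrite /binKL; lra.
Qed.

Lemma KLball_mass_le eps t : nuh x <= t ->
    (forall b, nuh x < b < 1 -> binKL (nuh x) b <= eps -> b <= t) ->
  ubound [set nu x | nu in KLball X nuh eps] t.
Proof.
move=> ct t_max _ [nu [nu_pmf [ac KL]] <-]; have [bc|cb] := leP (nu x) (nuh x).
  exact: le_trans ct.
have c_lt1 : nuh x < 1 := lt_le_trans cb (pmf_le1 nu_pmf Xx).
have b1 := mass_lt1 nu_pmf ac c_lt1.
apply: t_max; first by rewrite cb.
by rewrite -lee_fin (le_trans _ KL) // KLdiv_ge_binKL // ltW.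
Qed.

(* When [nuh x = 1] the rescaling factor is [0 / 0 = 0]. *)
Definition mass_shift t (z : 'rV[R]_m) : R :=
  if z == x then t else nuh z * ((1 - t) / (1 - nuh x)).

Lemma mass_shift_x t : mass_shift t x = t.
Proof. by rewrite /mass_shift eqxx. Qed.

Lemma mass_shift_atom t j :
  xh j != x -> mass_shift t (xh j) = w j * ((1 - t) / (1 - nuh x)).
Proof. by move=> jx; rewrite /mass_shift (negbTE jx) empirical_atom. Qed.

Lemma mass_shift_notin t z : z \notin support_seq -> mass_shift t z = 0.
Proof.
move=> zs; have zx : z != x by apply: contraNneq zs => ->; rewrite mem_head.
by rewrite /mass_shift (negbTE zx) empirical_notin_support ?mul0r.
Qed.

Lemma supp_mass_shift t : supp (mass_shift t) `<=` supp nuh `|` [set x].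
Proof.
move=> z; rewrite /supp /mass_shift /=; have [->|_] := eqVneq z x; first by right.
by rewrite mulf_eq0 negb_or => /andP[nz _]; left.
Qed.

Lemma supp_mass_shift_support_seq t : supp (mass_shift t) `<=` [set z | z \in support_seq].
Proof. by move=> z; apply: contraNT => /mass_shift_notin ->. Qed.

Section ShiftedMass.
Variable t : R.
Hypotheses (ct : nuh x <= t) (t_le1 : t <= 1) (t_lt1 : nuh x < 1 -> t < 1).

Lemma mass_shift_scaleE : (1 - nuh x) * ((1 - t) / (1 - nuh x)) = 1 - t.
Proof.
have [c1|c_lt1] := eqVneq (nuh x) 1.
  have -> : t = 1 by apply/eqP; rewrite eq_le t_le1 -{1}c1 ct.
  by rewrite subrr mul0r mulr0.
by rewrite mulrC divfK // subr_eq0 eq_sym.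
Qed.

Lemma mass_shift_scale_gt0 j : xh j != x -> 0 < (1 - t) / (1 - nuh x).
Proof.
move=> /empirical_lt1 c_lt1.
by apply: divr_gt0; rewrite subr_gt0 //; exact: t_lt1.
Qed.

Lemma mass_shift_ge0 z : 0 <= mass_shift t z.
Proof.
rewrite /mass_shift; case: eqP => _; first exact: le_trans (empirical_ge0 x) ct.
by rewrite mulr_ge0 ?empirical_ge0 ?divr_ge0 ?subr_ge0 ?empirical_le1.
Qed.

Lemma mass_shift_pmf : is_pmf X (mass_shift t).
Proof.
split; first exact: mass_shift_ge0.
split=> [z nXz|]; first by rewrite mass_shift_notin //; apply/negP => /support_seq_sub.
rewrite (esum_big_seq support_seq_uniq support_seq_sub (fun z _ => mass_shift_ge0 z)).
  rewrite big_support_seq mass_shift_x (eq_bigr _ (mass_shift_atom t)) -mulr_suml.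
  by rewrite sum_w_neq_x mass_shift_scaleE; congr (_%:E); ring.
by move=> z _ /mass_shift_notin.
Qed.

Lemma mass_shift_abs_cont : abs_cont nuh (mass_shift t).
Proof.
move=> z; have [->|zx] := eqVneq z x.
  by rewrite mass_shift_x => t0; apply/eqP; rewrite eq_le empirical_ge0 andbT -t0.
have [j /eqP xhjz|none] := pickP (fun j => xh j == z); last first.
  by move=> _; apply: empirical_eq0 => j; rewrite none.
rewrite -xhjz in zx *; rewrite mass_shift_atom // => /eqP.
by rewrite mulf_eq0 (gt_eqF (w_gt0 j)) (gt_eqF (mass_shift_scale_gt0 zx)).
Qed.

Lemma KLdiv_mass_shift : KLdiv X nuh (mass_shift t) = (binKL (nuh x) t)%:E.
Proof.
rewrite /KLdiv (esum_big_seq support_seq_uniq support_seq_sub); first last.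
- by move=> z _ /mass_shift_notin ->; rewrite mulr0.
- by move=> z _; rewrite mulr_ge0 ?fKL_ge0 ?mass_shift_ge0.
congr (_%:E); rewrite big_support_seq mass_shift_x fKL_divrM; last first.
  by move=> t0; apply/eqP; rewrite eq_le empirical_ge0 andbT -t0.
set r := (1 - t) / (1 - nuh x).
rewrite (eq_bigr (fun j => w j * (ln r^-1 - 1 + r))); last first.
  move=> j jx; have r_gt0 : 0 < r := mass_shift_scale_gt0 jx.
  rewrite mass_shift_atom // empirical_atom fKL_divrM; last first.
    by move=> /eqP; rewrite mulf_eq0 !gt_eqF.
  by rewrite invfM mulrA divff ?gt_eqF // mul1r -/r; ring.
rewrite -mulr_suml sum_w_neq_x /r invf_div; have := mass_shift_scaleE.
by rewrite /binKL -/r mulrDr => ->; ring.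
Qed.

End ShiftedMass.

End EmpiricalMeasure.
End KLBall.

Theorem mainTheorem2 (R : realType) (m N : nat) (X : set 'rV[R]_m)
  (xh : 'I_N -> 'rV[R]_m) (w : 'I_N -> R)
  (hX : countable X)
  (hxhX : forall j, X (xh j))
  (hinj : injective xh)
  (hpos : forall j, 0 < w j)
  (hsum : \sum_(j < N) w j = 1)
  (eps : R) (heps : 0 <= eps) (x : 'rV[R]_m) (hx : X x) :
  exists nustar : 'rV[R]_m -> R,
    KLball X (empirical w xh) eps nustar /\
    sup [set nu x | nu in KLball X (empirical w xh) eps] = nustar x /\
    (exists s : seq 'rV[R]_m, (size s <= N.+1)%N /\
       supp nustar `<=` [set z | z \in s]) /\
    supp nustar `<=` supp (empirical w xh) `|` [set x].
Proof.
have c01 : 0 <= empirical w xh x <= 1 by rewrite empirical_ge0 ?empirical_le1.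
have [t [/andP[ct t_le1] t_lt1 t_eps t_max]] := binKL_radius c01 heps.
have nustar_ball : KLball X (empirical w xh) eps (mass_shift xh w x t).
  split; first exact: mass_shift_pmf.
  split; first exact: mass_shift_abs_cont.
  by rewrite (KLdiv_mass_shift hxhX hinj hpos hsum hx) // lee_fin.
exists (mass_shift xh w x t); split; first exact: nustar_ball.
split.
  rewrite mass_shift_x; apply: sup_eq_max.
    by exists (mass_shift xh w x t); rewrite ?mass_shift_x.
  exact: KLball_mass_le t_max.
split; last exact: supp_mass_shift.
exists (support_seq xh x).
by split; [exact: size_support_seq | exact: supp_mass_shift_support_seq].
Qed.
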